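(* Let $\mathbf k$ be a commutative domain of characteristic zero, let $0\neq\psi(x)=\sum_{j=0}^s b_jx^j\in\mathbf k[x]$, and let $\omega=xy-y\psi(x)$. The following are equivalent: (1) for every commutative Rota-Baxter algebra $(R,P)$ of weight $0$, the $\omega$-cover $\widetilde P$ of $P$ on $R^{\mathbb N}$ (weight-$0$ Hurwitz product) is a Rota-Baxter operator of weight $0$; (2) $\deg\psi=1$ and $b_1=1$, i.e. $\omega=xy-(b_0y+yx)$; (3) for every commutative Rota-Baxter algebra $(R,P)$ of weight $0$ and every $f\in R^{\mathbb N}$, $\widetilde P_0(f)=P(f_0)$ and $\widetilde P_n(f)=b_0\widetilde P_{n-1}(f)+\widetilde P_{n-1}(\partial_Rf)$ for all $n\ge1$. Moreover, when $b_0=0$ in (3), $\widetilde P(f)=(P(f_0),P(f_1),P(f_2),\dots)$.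
   Context: A Rota-Baxter operator of weight $0$ on an algebra $A$ is a $\mathbf{k}$-linear $P$ with $P(x)P(y)=P(P(x)y)+P(xP(y))$. $R^{\mathbb N}$ is the set of sequences $(f_n)_{n\in\mathbb N}$ in $R$ with product $(fg)_n=\sum_{j=0}^n\binom{n}{j}f_{n-j}g_j$, and $(\partial_R f)_n=f_{n+1}$. For $\omega=xy-(\phi(x)+y\psi(x))$ with $\phi=\sum_{i=0}^r a_ix^i$, $\psi=\sum_{j=0}^s b_jx^j$ in $\mathbf k[x]$, the $\omega$-cover $\widetilde P$ of $P$ is the unique linear operator on $R^{\mathbb N}$ with $\widetilde P_0(f)=P(f_0)$ and $\widetilde P_n(f)=\sum_{i=0}^r a_if_{n-1+i}+\sum_{j=0}^s b_j\widetilde P_{n-1}(\partial_R^jf)$ for $n\ge1$, where $\widetilde P_n(f):=\widetilde P(f)_n$ (here $\phi=0$). *)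

From HB Require Import structures.
From mathcomp Require Import all_boot all_order all_algebra.
Set Implicit Arguments. Unset Strict Implicit. Unset Printing Implicit Defensive.
Import Order.TTheory GRing.Theory Num.Theory.
Local Open Scope ring_scope.

Section Defs.
Variables (k : comNzRingType) (R : comAlgType k).

(* P is a Rota-Baxter operator of weight 0 on R (k-linearity is imposed separately). *)
Definition is_RB0 (P : R -> R) : Prop :=
  forall x y : R, P x * P y = P (P x * y) + P (x * P y).

Definition hurwitz_mul (f g : nat -> R) : nat -> R :=
  fun n => \sum_(j < n.+1) ('C(n, j))%:R * f (n - j)%N * g j.

(* j-fold derivation: (partial_R^j f)_n = f_(n+j) *)
Definition dshift (j : nat) (f : nat -> R) : nat -> R := fun n => f (n + j)%N.

(* omega-cover for omega = xy - (phi(x) + y psi(x)):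
   cover_at phi psi P n f = \tilde P_n(f). *)
Fixpoint cover_at (phi psi : {poly k}) (P : R -> R) (n : nat) (f : nat -> R) : R :=
  match n with
  | 0 => P (f 0%N)
  | m.+1 => \sum_(i < size phi) phi`_i *: f (m + i)%N
            + \sum_(j < size psi) psi`_j *: cover_at phi psi P m (dshift j f)
  end.

Definition omega_cover (phi psi : {poly k}) (P : R -> R) (f : nat -> R) : nat -> R :=
  fun n => cover_at phi psi P n f.
End Defs.

(* With psi = X + b0 the cover of P is P composed with the cover C of the
   identity, and since the shift is a derivation of the Hurwitz product, C is
   Hurwitz-linear: C(a b) = a C(b).  The Rota-Baxter identity for the cover then
   reduces coefficientwise to the one for P.  Conversely, test in Hurwitz series
   over k[X] truncated after degree 2, with the integration as P; it is
   k[X]-linear.  A Hurwitz exponential e_x = (x^n)_n satisfies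
   shift^j e_x = x^j e_x, so its cover is (psi(x)^n P(1))_n.  For f = g = e_X
   the identity (1) at n = 1 reads 2 psi(psi + X) = 4 psi, which by a degree
   count forces psi = X + b0; the recursion (3) at n = 1 on e_X gives
   psi = b0 + X directly. *)

From HB Require Import structures.
From mathcomp Require Import all_boot all_order all_algebra ring zify.
Import Order.TTheory GRing.Theory Num.Theory.
Local Open Scope ring_scope.
Set Implicit Arguments. Unset Strict Implicit. Unset Printing Implicit Defensive.

Section HurwitzProduct.
Variables (k : comNzRingType) (R : comAlgType k).
Implicit Types (a b u v : nat -> R).

Local Notation hmul := (@hurwitz_mul k R).

Lemma eq_hurwitz_mul n a a' b b' : a =1 a' -> b =1 b' -> hmul a b n = hmul a' b' n.
Proof. by move=> eq_a eq_b; apply: eq_bigr => j _; rewrite eq_a eq_b. Qed.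

Lemma hurwitz_mulC a b n : hmul a b n = hmul b a n.
Proof.
rewrite /hurwitz_mul (reindex_inj rev_ord_inj) /=; apply: eq_bigr => j _.
have le_jn : (j <= n)%N by rewrite -ltnS ltn_ord.
by rewrite subSS subKn // bin_sub // mulrAC.
Qed.

Lemma hurwitz_mulrZD a (s : k) u v n :
  hmul a (fun j => s *: u j + v j) n = s *: hmul a u n + hmul a v n.
Proof.
rewrite /hurwitz_mul scaler_sumr -big_split; apply: eq_bigr => j _.
by rewrite mulrDr scalerAr.
Qed.

Lemma hurwitz_mul_leibniz a b n :
  hmul a b n.+1 = hmul (dshift 1 a) b n + hmul a (dshift 1 b) n.
Proof.
rewrite /hurwitz_mul big_ord_recl.
under eq_bigr => j _ do rewrite binS natrD !mulrDl.
rewrite big_split /= addrA; congr (_ + _); last first.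
  by apply: eq_bigr => j _; rewrite /dshift addn1 subSS.
rewrite [in RHS]big_ord_recl [X in _ = _ + X](_ : _ = \sum_(i < n)
   ('C(n, i.+1))%:R * a (n - i)%N * b i.+1).
- rewrite big_ord_recr /= (bin_small (ltnSn n)) !mul0r addr0.
  by rewrite /dshift !subn0 addn1 !bin0.
- by apply: eq_bigr => j _; rewrite /dshift lift0 addn1 subnSK.
Qed.

End HurwitzProduct.

Section Cover.
Variables (k : comNzRingType) (psi : {poly k}) (R : comAlgType k).
Implicit Types (P : R -> R) (a b f g : nat -> R).

Lemma cover_succ P n f :
  cover_at 0 psi P n.+1 f = \sum_(j < size psi) psi`_j *: cover_at 0 psi P n (dshift j f).
Proof. by rewrite /= size_poly0 big_ord0 add0r. Qed.

Lemma eq_cover P n f g : f =1 g -> cover_at 0 psi P n f = cover_at 0 psi P n g.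
Proof.
elim: n f g => [|n IHn] f g eq_fg; first by rewrite /= eq_fg.
rewrite !cover_succ; apply: eq_bigr => j _.
by rewrite (IHn _ (dshift j g)) // => m; apply: eq_fg.
Qed.

Lemma cover_linear (P : {linear R -> R}) n f :
  cover_at 0 psi P n f = P (cover_at 0 psi idfun n f).
Proof.
elim: n f => [|n IHn] f //.
by rewrite !cover_succ linear_sum; apply: eq_bigr => j _; rewrite linearZ IHn.
Qed.

Lemma cover_idD n f g :
  cover_at 0 psi idfun n (fun m => f m + g m)
  = cover_at 0 psi idfun n f + cover_at 0 psi idfun n g.
Proof.
elim: n f g => [|n IHn] f g //.
rewrite !cover_succ -big_split; apply: eq_bigr => j _ /=.
by rewrite -scalerDr -IHn.
Qed.

Lemma cover_one P f : cover_at 0 psi P 1 f = \sum_(j < size psi) psi`_j *: P (f j).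
Proof. by rewrite cover_succ; apply: eq_bigr => j _; rewrite /= /dshift add0n. Qed.

Section LinearPsi.
Hypotheses (size_psi : size psi = 2%N) (psi1 : psi`_1 = 1).

Lemma cover_succ_deg1 P n f :
  cover_at 0 psi P n.+1 f = psi`_0 *: cover_at 0 psi P n f + cover_at 0 psi P n (dshift 1 f).
Proof.
rewrite cover_succ size_psi big_ord_recr big_ord1 /= psi1 scale1r.
by congr (_ *: _ + _); apply: eq_cover => m; rewrite /dshift addn0.
Qed.

Lemma cover_id_hurwitz_mul n a b :
  cover_at 0 psi idfun n (hurwitz_mul a b)
  = hurwitz_mul a (fun j => cover_at 0 psi idfun j b) n.
Proof.
elim: n a b => [|n IHn] a b; first by rewrite /= /hurwitz_mul !big_ord1.
rewrite cover_succ_deg1 IHn.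
rewrite (eq_cover _ _
    (g := fun m => hurwitz_mul (dshift 1 a) b m + hurwitz_mul a (dshift 1 b) m));
  last by move=> m; rewrite -hurwitz_mul_leibniz /dshift addn1.
rewrite cover_idD !IHn hurwitz_mul_leibniz.
have cover_dshift : dshift 1 (fun j => cover_at 0 psi idfun j b)
    =1 fun j => psi`_0 *: cover_at 0 psi idfun j b + cover_at 0 psi idfun j (dshift 1 b).
  by move=> m; rewrite /dshift /= addn1 cover_succ_deg1.
rewrite (eq_hurwitz_mul n (frefl a) cover_dshift).
by rewrite hurwitz_mulrZD addrCA.
Qed.

Lemma omega_cover_is_RB0 (P : {linear R -> R}) : is_RB0 P -> forall f g n,
  hurwitz_mul (omega_cover 0 psi P f) (omega_cover 0 psi P g) n
  = omega_cover 0 psi P (hurwitz_mul (omega_cover 0 psi P f) g) n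
    + omega_cover 0 psi P (hurwitz_mul f (omega_cover 0 psi P g)) n.
Proof.
move=> RB_P f g n; rewrite /omega_cover !(cover_linear P).
set F := fun j => P (cover_at 0 psi idfun j f).
set G := fun j => P (cover_at 0 psi idfun j g).
have eqF : (fun j => cover_at 0 psi P j f) =1 F by move=> j; rewrite (cover_linear P).
have eqG : (fun j => cover_at 0 psi P j g) =1 G by move=> j; rewrite (cover_linear P).
rewrite (eq_hurwitz_mul n eqF eqG).
rewrite (eq_cover _ _ (g := hurwitz_mul F g));
  last by move=> m; exact: (eq_hurwitz_mul m eqF (frefl g)).
rewrite (@eq_cover idfun n (hurwitz_mul f (fun j => cover_at 0 psi P j g)) (hurwitz_mul G f));
  last first.
  by move=> m; rewrite hurwitz_mulC; exact: (eq_hurwitz_mul m eqG (frefl f)).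
rewrite !cover_id_hurwitz_mul (hurwitz_mulC G) /hurwitz_mul !linear_sum -big_split.
apply: eq_bigr => j _ /=.
by rewrite -!mulrA !mulr_natl !raddfMn -mulrnDl /F /G RB_P.
Qed.

End LinearPsi.
End Cover.

Lemma comp_addX_eq_double (k : idomainType) (psi : {poly k}) :
  psi != 0 -> psi \Po (psi + 'X) = psi *+ 2 -> size psi = 2%N /\ psi`_1 = 1.
Proof.
move=> psi_neq0 eq_comp.
have [size_le1 | size_gt1] := leqP (size psi) 1.
  have psiC : psi = (psi`_0)%:P by exact: size1_polyC.
  move: eq_comp; rewrite [X in X \Po _]psiC comp_polyC -psiC.
  by rewrite mulr2n -{1}[psi]addr0 => /addrI psi0; rewrite -psi0 eqxx in psi_neq0.
have [size_gt2 | size_le2] := ltnP 2 (size psi).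
  have size_shift : size (psi + 'X) = size psi by rewrite size_polyDl // size_polyX.
  have size_double : (size (psi *+ 2) <= size psi)%N.
    by rewrite mulr2n (leq_trans (size_polyD _ _)) // maxnn.
  have := size_comp_poly psi (psi + 'X); rewrite eq_comp size_shift.
  move: size_double size_gt2; set d := size psi; set e := size (psi *+ 2); nia.
have size2 : size psi = 2%N by apply/eqP; rewrite eqn_leq size_le2.
have psi1_neq0 : psi`_1 != 0 by rewrite -[1%N]/(2.-1) -size2 -lead_coefE lead_coef_eq0.
split=> //; move/(congr1 (coefp 1)): eq_comp.
rewrite comp_polyE size2 !big_ord_recr big_ord0 /= add0r expr0 expr1 alg_polyC.
rewrite coefD coefC !coefZ coefD coefX coefMn /= add0r mulrDr mulr1 mulr2n.
by move/addIr=> sq_psi1; apply: (mulfI psi1_neq0); rewrite mulr1.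
Qed.

(* Hurwitz series over A modulo the ideal of those vanishing in degrees <= 2,
   i.e. triples with the Hurwitz product (whence the binomial 2 = 'C(2, 1)); the
   integration [hur_int] shifts the coefficients up. *)
Section TruncatedHurwitz.
Variables (k : comNzRingType) (A : comAlgType k).

Record hur3 := Hur3 { hur0 : A; hur1 : A; hur2 : A }.

Lemma hur3_ext (x y : hur3) :
  hur0 x = hur0 y -> hur1 x = hur1 y -> hur2 x = hur2 y -> x = y.
Proof. by case: x y => ? ? ? [? ? ?] /= -> -> ->. Qed.

Definition hur3_tuple (x : hur3) : A * A * A := (hur0 x, hur1 x, hur2 x).
Definition tuple_hur3 (x : A * A * A) : hur3 := Hur3 x.1.1 x.1.2 x.2.
Lemma hur3_tupleK : cancel hur3_tuple tuple_hur3. Proof. by case. Qed.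
HB.instance Definition _ := Choice.copy hur3 (can_type hur3_tupleK).

Definition hur3_add x y := Hur3 (hur0 x + hur0 y) (hur1 x + hur1 y) (hur2 x + hur2 y).
Definition hur3_opp x := Hur3 (- hur0 x) (- hur1 x) (- hur2 x).
Definition hur3_zero := Hur3 0 0 0.

Lemma hur3_addA : associative hur3_add.
Proof. by move=> x y z; apply: hur3_ext => /=; rewrite addrA. Qed.
Lemma hur3_addC : commutative hur3_add.
Proof. by move=> x y; apply: hur3_ext => /=; rewrite addrC. Qed.
Lemma hur3_add0 : left_id hur3_zero hur3_add.
Proof. by move=> x; apply: hur3_ext => /=; rewrite add0r. Qed.
Lemma hur3_addN : left_inverse hur3_zero hur3_opp hur3_add.
Proof. by move=> x; apply: hur3_ext => /=; rewrite addNr. Qed.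
HB.instance Definition _ :=
  GRing.isZmodule.Build hur3 hur3_addA hur3_addC hur3_add0 hur3_addN.

Definition hur3_scale (a : k) x := Hur3 (a *: hur0 x) (a *: hur1 x) (a *: hur2 x).

Lemma hur3_scaleA a b x : hur3_scale a (hur3_scale b x) = hur3_scale (a * b) x.
Proof. by apply: hur3_ext => /=; rewrite scalerA. Qed.
Lemma hur3_scale1 : left_id 1 hur3_scale.
Proof. by move=> x; apply: hur3_ext => /=; rewrite scale1r. Qed.
Lemma hur3_scaleDr : right_distributive hur3_scale +%R.
Proof. by move=> a x y; apply: hur3_ext => /=; rewrite scalerDr. Qed.
Lemma hur3_scaleDl x : {morph hur3_scale^~ x : a b / a + b}.
Proof. by move=> a b; apply: hur3_ext => /=; rewrite scalerDl. Qed.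
HB.instance Definition _ := GRing.Zmodule_isLmodule.Build k hur3
  hur3_scaleA hur3_scale1 hur3_scaleDr hur3_scaleDl.

Definition hur3_mul x y := Hur3 (hur0 x * hur0 y)
  (hur0 x * hur1 y + hur1 x * hur0 y)
  (hur0 x * hur2 y + 2%:R * (hur1 x * hur1 y) + hur2 x * hur0 y).
Definition hur3_one := Hur3 1 0 0.

Lemma hur3_mulA : associative hur3_mul.
Proof. by move=> x y z; apply: hur3_ext => /=; ring. Qed.
Lemma hur3_mulC : commutative hur3_mul.
Proof. by move=> x y; apply: hur3_ext => /=; ring. Qed.
Lemma hur3_mul1 : left_id hur3_one hur3_mul.
Proof. by move=> x; apply: hur3_ext => /=; ring. Qed.
Lemma hur3_mulDl : left_distributive hur3_mul +%R.
Proof. by move=> x y z; apply: hur3_ext => /=; ring. Qed.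
Lemma hur3_one_neq0 : hur3_one != 0.
Proof. by apply/eqP => /(congr1 hur0) /= /eqP; rewrite oner_eq0. Qed.
HB.instance Definition _ := GRing.Zmodule_isComNzRing.Build hur3
  hur3_mulA hur3_mulC hur3_mul1 hur3_mulDl hur3_one_neq0.

Lemma hur3_scalerAl (a : k) (x y : hur3) : a *: (x * y) = (a *: x) * y.
Proof.
by apply: hur3_ext; rewrite /= ?scalerDr -!scalerAl // -scalerAr.
Qed.
HB.instance Definition _ := GRing.Lmodule_isLalgebra.Build k hur3 hur3_scalerAl.
HB.instance Definition _ := GRing.Lalgebra_isComAlgebra.Build k hur3.

Definition hur_int (x : hur3) := Hur3 0 (hur0 x) (hur1 x).

Lemma hur_int_is_linear : linear hur_int.
Proof. by move=> a x y; apply: hur3_ext => /=; rewrite ?scaler0 ?addr0. Qed.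
HB.instance Definition _ :=
  GRing.isLinear.Build k hur3 hur3 *:%R hur_int hur_int_is_linear.

Lemma hur_int_RB0 : is_RB0 hur_int.
Proof. by move=> x y; apply: hur3_ext => /=; ring. Qed.

Lemma hur3_sum I (r : seq I) (p : pred I) (F : I -> hur3) :
  \sum_(i <- r | p i) F i = Hur3 (\sum_(i <- r | p i) hur0 (F i))
    (\sum_(i <- r | p i) hur1 (F i)) (\sum_(i <- r | p i) hur2 (F i)).
Proof.
by apply: hur3_ext => /=; [exact: (big_morph hur0 (fun _ _ => erefl) erefl)
  | exact: (big_morph hur1 (fun _ _ => erefl) erefl)
  | exact: (big_morph hur2 (fun _ _ => erefl) erefl)].
Qed.

Lemma hur3_natr n : n%:R = Hur3 n%:R 0 0 :> hur3.
Proof.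
elim: n => [|n IHn]; apply: hur3_ext => //=; rewrite !mulrS IHn //= ?addr0 //.
Qed.

End TruncatedHurwitz.
Arguments hur_int {k A}.
Arguments hur_int_RB0 {k A}.

Section ExponentialTest.
Variables (k : idomainType) (psi : {poly k}).
Local Notation hur := (hur3 {poly k}).

Lemma cover_hur_int_exp (c x : {poly k}) n :
  cover_at 0 psi hur_int n (fun m => Hur3 (c * x ^+ m) 0 0 : hur)
  = Hur3 0 (c * (psi \Po x) ^+ n) 0.
Proof.
elim: n c => [|n IHn] c; first by rewrite /= expr0 mulr1.
rewrite cover_succ.
under eq_bigr => j _.
  rewrite (eq_cover _ _ _ (g := fun m => Hur3 (c * x ^+ j * x ^+ m) 0 0)); last first.
    by move=> m; rewrite /dshift addnC exprD mulrA.
  rewrite IHn.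
  over.
apply: hur3_ext; rewrite hur3_sum /=.
- by rewrite big1 // => j _; rewrite scaler0.
- rewrite comp_polyE exprSr mulrA mulr_sumr; apply: eq_bigr => j _.
  by rewrite -scalerAr mulrAC.
- by rewrite big1 // => j _; rewrite scaler0.
Qed.

Lemma hurwitz_mul_hur_exp (u v : {poly k}) n :
  hurwitz_mul (fun m => Hur3 0 (u ^+ m) 0 : hur) (fun m => Hur3 (v ^+ m) 0 0) n
  = Hur3 0 ((u + v) ^+ n) 0.
Proof.
apply: hur3_ext; rewrite /hurwitz_mul hur3_sum /=.
- by rewrite big1 // => j _; rewrite hur3_natr /= !mulr0 mul0r.
- rewrite exprDn; apply: eq_bigr => j _ /=.
  by rewrite hur3_natr /= !mulr0 !add0r addr0 -mulrA mulr_natl.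
- by rewrite big1 // => j _; rewrite hur3_natr /= !(mulr0, mul0r, addr0).
Qed.

Local Notation expX := (fun m => Hur3 ('X ^+ m) 0 0 : hur).

Lemma cover_hur_int_expX n : cover_at 0 psi hur_int n expX = Hur3 0 (psi ^+ n) 0.
Proof.
rewrite (eq_cover _ _ _ (g := fun m => Hur3 (1 * 'X ^+ m) 0 0));
  last by move=> m; rewrite mul1r.
by rewrite cover_hur_int_exp comp_polyXr mul1r.
Qed.

Lemma hur_int_cover_rec_expX :
  omega_cover 0 psi hur_int expX 1
  = psi`_0 *: omega_cover 0 psi hur_int expX 0 + omega_cover 0 psi hur_int (dshift 1 expX) 0 ->
  size psi = 2%N /\ psi`_1 = 1.
Proof.
rewrite /omega_cover cover_hur_int_expX /= => /(congr1 (@hur1 _ _)) /=.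
rewrite expr1 expr0 add0n expr1 alg_polyC => ->.
by rewrite addrC size_XaddC coefD coefC coefX addr0.
Qed.

Lemma hur_int_cover_RB0_expX : [pchar k] =i pred0 ->
  hurwitz_mul (omega_cover 0 psi hur_int expX) (omega_cover 0 psi hur_int expX) 1
  = omega_cover 0 psi hur_int (hurwitz_mul (omega_cover 0 psi hur_int expX) expX) 1
    + omega_cover 0 psi hur_int (hurwitz_mul expX (omega_cover 0 psi hur_int expX)) 1 ->
  psi \Po (psi + 'X) = psi *+ 2.
Proof.
move=> char0; rewrite /omega_cover.
set F := fun m => Hur3 0 (psi ^+ m) 0 : hur.
have eqF : (fun m => cover_at 0 psi hur_int m expX) =1 F.
  by move=> m; apply: cover_hur_int_expX.
have FexpX : hurwitz_mul F expX =1 fun m => Hur3 0 ((psi + 'X) ^+ m) 0.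
  by move=> m; apply: hurwitz_mul_hur_exp.
rewrite (eq_hurwitz_mul 1 eqF eqF).
rewrite (eq_cover _ _ _ (g := fun m => Hur3 0 ((psi + 'X) ^+ m) 0)); last first.
  by move=> m; rewrite -FexpX; apply: eq_hurwitz_mul.
rewrite (eq_cover _ _ _ (g := fun m => Hur3 0 ((psi + 'X) ^+ m) 0)); last first.
  by move=> m; rewrite hurwitz_mulC -FexpX; apply: eq_hurwitz_mul.
rewrite cover_one /hurwitz_mul !big_ord_recr big_ord0 /= => /(congr1 (@hur2 _ _)).
rewrite bin0 binn subn0 subnn !mul1r hur3_sum /= -comp_polyE expr1 expr0 mulr1 mul1r.
rewrite !(mul0r, add0r, addr0) -!mulr2n.
have two_neq0 : (2%:R : {poly k}) != 0.
  by rewrite -polyC_natr polyC_eq0; move/pcharf0P: char0 => ->.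
move=> eq_double; apply: (mulfI two_neq0).
by rewrite mulr_natl -eq_double !mulr_natl.
Qed.

End ExponentialTest.

Theorem proposition3p5 (k : idomainType) (hchar : [pchar k] =i pred0)
    (psi : {poly k}) (hpsi : psi != 0) :
  let cond1 := forall (R : comAlgType k) (P : {linear R -> R}), is_RB0 P ->
      forall (f g : nat -> R) (n : nat),
        hurwitz_mul (omega_cover 0 psi P f) (omega_cover 0 psi P g) n
        = omega_cover 0 psi P (hurwitz_mul (omega_cover 0 psi P f) g) n
          + omega_cover 0 psi P (hurwitz_mul f (omega_cover 0 psi P g)) n in
  let cond2 := size psi = 2%N /\ psi`_1 = 1 in
  let cond3 := forall (R : comAlgType k) (P : {linear R -> R}), is_RB0 P ->
      forall f : nat -> R,
        omega_cover 0 psi P f 0%N = P (f 0%N) /\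
        (forall n : nat, (1 <= n)%N ->
           omega_cover 0 psi P f n
           = psi`_0 *: omega_cover 0 psi P f n.-1 + omega_cover 0 psi P (dshift 1 f) n.-1) in
  [/\ cond1 <-> cond2, cond2 <-> cond3 &
      (cond3 -> psi`_0 = 0 ->
       forall (R : comAlgType k) (P : {linear R -> R}), is_RB0 P ->
       forall (f : nat -> R) (n : nat), omega_cover 0 psi P f n = P (f n))].
Proof.
move=> cond1 cond2 cond3.
have c1_c2 : cond1 -> cond2.
  move=> RB_cover; apply: (comp_addX_eq_double hpsi); apply: (hur_int_cover_RB0_expX hchar).
  exact: (RB_cover _ _ hur_int_RB0 _ _ 1%N).
have c2_c1 : cond2 -> cond1 by case=> size_psi psi1 R P; exact: omega_cover_is_RB0.
have c2_c3 : cond2 -> cond3.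
  by case=> size_psi psi1 R P _ f; split=> // -[//|n] _; exact: cover_succ_deg1.
have c3_c2 : cond3 -> cond2.
  move=> cover_rec; apply: hur_int_cover_rec_expX.
  exact: (proj2 (cover_rec _ hur_int hur_int_RB0 _) 1%N isT).
split; [by split | by split |].
move=> cover_rec psi0 R P RB_P f n; elim: n f => [|n IHn] f //.
have [_ ->] := cover_rec R P RB_P f; last by [].
by rewrite psi0 scale0r add0r /= IHn /dshift addn1.
Qed.
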